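(* Let $M$ be a set of $m$ sources and $N$ a set of $n$ sinks, let $\mathbf{d}:M\to\mathbb{Z}_{\ge0}$ satisfy $n = 1+\sum_{\mu}\mathbf{d}(\mu)$, and let $P_{\mathbf{d}}$ be the transportation polytope with supply $\mathbf{m}(\mu)=1+m\,\mathbf{d}(\mu)$ and demand $\mathbf{n}(\nu)=m$. If at least two sources $\mu$ satisfy $\mathbf{d}(\mu)\ge 1$, then $P_{\mathbf{d}}$ has exactly $mn$ facets.
   Context: The transportation polytope with supply $\mathbf{m}$ and demand $\mathbf{n}$ (equal totals) is $\{x\in\mathbb{R}_{\ge0}^{M\times N} : \sum_\nu x_{\mu,\nu}=\mathbf{m}(\mu)\ \forall\mu,\ \sum_\mu x_{\mu,\nu}=\mathbf{n}(\nu)\ \forall\nu\}$. *)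

From HB Require Import structures.
From mathcomp Require Import all_boot all_order all_algebra.
Set Implicit Arguments. Unset Strict Implicit. Unset Printing Implicit Defensive.
Import Order.TTheory GRing.Theory Num.Theory.
Local Open Scope ring_scope.

Section Polytope.
Variables (R : realFieldType) (m n : nat).
Notation pt := 'M[R]_(m, n).

Definition ptset := pt -> Prop.

Definition pairing (c x : pt) : R := \sum_(i < m) \sum_(j < n) c i j * x i j.

Definition aff_indep (s : seq pt) : Prop :=
  match s with
  | [::] => True
  | x0 :: t => free [seq y - x0 | y <- t]
  end.

Definition aff_dim_ge (S : ptset) (k : nat) : Prop :=
  exists s : seq pt, size s = k.+1 /\ (forall x, x \in s -> S x) /\ aff_indep s.

Definition aff_dim_eq (S : ptset) (k : nat) : Prop :=
  aff_dim_ge S k /\ ~ aff_dim_ge S k.+1.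

Definition is_face (P F : ptset) : Prop :=
  exists (c : pt) (b : R),
    (forall x, P x -> pairing c x <= b) /\
    (forall x, F x <-> (P x /\ pairing c x = b)).

Definition is_facet (P F : ptset) : Prop :=
  is_face P F /\ exists k : nat, aff_dim_eq P k.+1 /\ aff_dim_eq F k.

Definition num_facets_eq (P : ptset) (k : nat) : Prop :=
  exists f : 'I_k -> ptset,
    (forall i, is_facet P (f i)) /\
    (forall i j, (forall x, f i x <-> f j x) -> i = j) /\
    (forall F, is_facet P F -> exists i, forall x, F x <-> f i x).

Definition transportation_polytope (sup : 'I_m -> R) (dem : 'I_n -> R) : ptset :=
  fun x => (forall i j, 0 <= x i j) /\
           (forall i, \sum_(j < n) x i j = sup i) /\
           (forall j, \sum_(i < m) x i j = dem j).

Definition P_d (d : 'I_m -> nat) : ptset :=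
  transportation_polytope (fun i => (1 + m * d i)%:R) (fun _ => m%:R).

End Polytope.

(* In a polyhedron P = {x >= 0, A x = b} in R^(M x N) containing a strictly
   positive point, every facet is a coordinate face: a face not contained in any
   hyperplane x_ij = 0 contains a strictly positive point z (an average of its
   points), and since z + e (z - p) stays in P for every p in P and small e > 0,
   the supporting inequality is tight on all of P.  Conversely {x_ij = 0} is a
   facet of P as soon as some point q of P vanishes exactly at (i, j): the
   directions of P inside the hyperplane, added to q with a small coefficient,
   keep the point in the face, so the face has codimension one.
   For P_d such a point exists for every (i, j): put 0 at (i, j), spread the
   supply s_i = 1 + m d_i evenly over the other n - 1 cells of row i, and fill
   the remaining rows with the product plan of the remaining supplies and
   demands.  Its entries are positive because s_i < m (n - 1), which is where
   the two sources with d >= 1 are needed. *)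

From HB Require Import structures.
From mathcomp Require Import all_boot all_order all_algebra.
From mathcomp Require Import zify lra.
From Stdlib Require Import Classical FunctionalExtensionality PropExtensionality.
Import Order.TTheory GRing.Theory Num.Theory.
Set Implicit Arguments. Unset Strict Implicit. Unset Printing Implicit Defensive.
Local Open Scope ring_scope.

Lemma ler_sum_term (R : numDomainType) (I : eqType) (r : seq I) (F : I -> R) i :
  i \in r -> (forall j, 0 <= F j) -> F i <= \sum_(j <- r) F j.
Proof. by move=> ri F_ge0; rewrite (big_rem i) //= lerDl sumr_ge0. Qed.

Section AffineDimension.
Variables (R : realFieldType) (m n : nat).
Notation pt := 'M[R]_(m, n).
Implicit Types (S G : ptset R m n) (c x y : pt) (Y : 'I_m -> 'I_n -> pt).

Fact pairing_is_linear c : linear (pairing c : pt -> R^o).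
Proof.
move=> a x y; rewrite /pairing /GRing.scale /= big_distrr -big_split; apply: eq_bigr => i _ /=.
rewrite big_distrr -big_split; apply: eq_bigr => j _ /=.
by rewrite !mxE mulrDr mulrCA.
Qed.

HB.instance Definition _ c :=
  GRing.isLinear.Build R pt R^o _ (pairing c) (pairing_is_linear c).

Lemma pairing_delta i j x : pairing (delta_mx i j) x = x i j.
Proof.
rewrite /pairing (bigD1 i) //= [X in _ + X]big1 ?addr0 => [|k /negbTE ki].
  rewrite (bigD1 j) //= [X in _ + X]big1 ?addr0 => [|l /negbTE lj].
    by rewrite mxE !eqxx mul1r.
  by rewrite mxE eqxx lj mul0r.
by apply: big1 => l _; rewrite mxE ki mul0r.
Qed.

Lemma pairingN c x : pairing (- c) x = - pairing c x.
Proof.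
rewrite /pairing -sumrN; apply: eq_bigr => k _; rewrite -sumrN.
by apply: eq_bigr => l _; rewrite mxE mulNr.
Qed.

Lemma size_free_le (X : seq pt) : free X -> (size X <= m * n)%N.
Proof. by move=> /eqP <-; rewrite (leq_trans (dimvS (subvf _))) // dimvf dim_matrix. Qed.

Lemma free_scale (X : seq pt) (e : R) :
  e != 0 -> free [seq e *: x | x <- X] = free X.
Proof.
move=> e0; rewrite /free size_map; suff -> : <<[seq e *: x | x <- X]>>%VS = <<X>>%VS by [].
apply/eqP; rewrite eqEsubv; apply/andP; split; apply/span_subvP => y.
  by move=> /mapP [x xX ->]; rewrite memvZ ?memv_span.
by move=> yX; rewrite -[y](scalerK e0) memvZ ?memv_span ?map_f.
Qed.

Lemma aff_dim_ge_le S k : aff_dim_ge S k -> (k <= m * n)%N.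
Proof. by case=> [[|x0 t] [//= [<- [_ /size_free_le]]]]; rewrite size_map. Qed.

Lemma aff_dim_ge_leq S k k' : (k' <= k)%N -> aff_dim_ge S k -> aff_dim_ge S k'.
Proof.
move=> le_k'k [[|x0 t] [//= [st [St free_t]]]].
exists (x0 :: take k' t); split; first by rewrite /= size_takel ?st.
split=> [x /predU1P [->|/mem_take xt]|].
- exact/St/mem_head.
- by apply: St; rewrite inE xt orbT.
- by move: free_t; rewrite /= -{1}(cat_take_drop k' t) map_cat => /catl_free.
Qed.

Lemma aff_dim_ge_sub S G k :
  (forall x, S x -> G x) -> aff_dim_ge S k -> aff_dim_ge G k.
Proof. by move=> SG [s [? [Ss ?]]]; exists s; split=> //; split=> // x /Ss /SG. Qed.

Lemma aff_dim_ge0 S x : S x -> aff_dim_ge S 0.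
Proof.
by move=> Sx; exists [:: x]; do !split=> //=; [move=> y /[!inE] /eqP -> | exact: nil_free].
Qed.

Lemma aff_dim_ge_translate S q (B : seq pt) (e : R) : e != 0 -> S q ->
  (forall v, v \in B -> S (q + e *: v)) -> free B -> aff_dim_ge S (size B).
Proof.
move=> e0 Sq SB freeB; exists (q :: [seq q + e *: v | v <- B]).
split; first by rewrite /= size_map.
split=> [x /predU1P [-> //|/mapP [v vB ->]]|]; first exact: SB.
rewrite /=; have -> : [seq y - q | y <- [seq q + e *: v | v <- B]] = [seq e *: v | v <- B].
  by rewrite -map_comp; apply: eq_map => v /=; rewrite addrC addKr.
by rewrite free_scale.
Qed.

Lemma aff_dim_ge_lift S G c b s k :
  (forall x, G x -> S x /\ pairing c x = b) -> S s -> pairing c s != b ->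
  aff_dim_ge G k -> aff_dim_ge S k.+1.
Proof.
move=> GS Ss cs [[|x0 t] [//= [st [Gt free_t]]]].
have [Sx0 cx0] := GS x0 (Gt x0 (mem_head _ _)).
have Gt' y : y \in t -> G y by move=> yt; apply: Gt; rewrite inE yt orbT.
exists [:: x0, s & t]; split; first by rewrite /= st.
split=> [x /[!inE] /or3P [/eqP -> //|/eqP -> //|/Gt' /GS []//]|].
rewrite /= free_cons free_t andbT; apply: contra cs => s_span.
have sub : (<<[seq y - x0 | y <- t]>> <= lker (linfun (pairing c : pt -> R^o)))%VS.
  apply/span_subvP => _ /mapP [y /Gt' /GS [_ cy] ->].
  by rewrite memv_ker lfunE /= linearB /= cx0 cy subrr.
by move: (subvP sub _ s_span); rewrite memv_ker lfunE /= linearB /= cx0 subr_eq0.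
Qed.

Lemma aff_dim_eq_exists S x : S x -> exists k, aff_dim_eq S k.
Proof.
move=> Sx; suff top r k : (m * n - k <= r)%N -> aff_dim_ge S k -> exists k, aff_dim_eq S k.
  by apply: (top (m * n)%N 0%N); [rewrite subn0 | exact: aff_dim_ge0 Sx].
elim: r k => [|r IH] k lek Sk; have [Sk1|nSk1] := classic (aff_dim_ge S k.+1).
- by have := aff_dim_ge_le Sk1; lia.
- by exists k.
- by apply: IH Sk1; lia.
- by exists k.
Qed.

Lemma dim_span_diff (p0 q : pt) (ps : seq pt) : aff_indep (p0 :: ps) ->
  (size ps <= \dim <<[seq (p - q)%R | p <- p0 :: ps]>>)%N.
Proof.
move=> /eqP; rewrite size_map => <-; apply: dimvS; apply/span_subvP => _ /mapP [p pps ->].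
have -> : p - p0 = (p - q) - (p0 - q) by rewrite opprB addrA subrK.
rewrite rpredB ?memv_span ?mem_head //; apply: mem_behead; exact: map_f.
Qed.

Lemma dim_cap_lker_ge (U : {vspace pt}) (f : 'Hom(pt, R^o)) :
  (\dim U <= (\dim (U :&: lker f)).+1)%N.
Proof.
rewrite -[in X in (X <= _)%N](limg_ker_dim f U) -addn1 leq_add2l.
by rewrite (leq_trans (dimvS (subvf _))) ?dimvf.
Qed.

Definition mean (Y : 'I_m -> 'I_n -> pt) : pt := (m * n)%:R^-1 *: \sum_i \sum_j Y i j.

Lemma linear_mean (wT : lmodType R) (f : {linear pt -> wT}) Y v :
  (0 < m * n)%N -> (forall i j, f (Y i j) = v) -> f (mean Y) = v.
Proof.
move=> mn_gt0 fY; rewrite linearZ linear_sum (eq_bigr (fun _ => v *+ n)) => [|i _].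
  rewrite /= sumr_const card_ord -mulrnA [(n * m)%N]mulnC -scaler_nat scalerA.
  by rewrite mulVf ?scale1r // pnatr_eq0 -lt0n.
by rewrite linear_sum (eq_bigr (fun _ => v)) // sumr_const card_ord.
Qed.

Lemma mean_gt0 Y k l : (0 < m * n)%N -> (forall i j k l, 0 <= Y i j k l) ->
  0 < Y k l k l -> 0 < mean Y k l.
Proof.
move=> mn_gt0 Y_ge0 Ykl; rewrite !mxE summxE mulr_gt0 ?invr_gt0 ?ltr0n //.
rewrite (bigD1 k) //= summxE (bigD1 l) //= -addrA ltr_pwDl //.
by rewrite addr_ge0 ?sumr_ge0 // => i _; rewrite summxE sumr_ge0.
Qed.

End AffineDimension.

Section StandardForm.
Variables (R : realFieldType) (m n : nat) (vT : vectType R).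
Variables (A : 'Hom('M[R]_(m, n), vT)) (b : vT).
Notation pt := 'M[R]_(m, n).
Implicit Types (F : ptset R m n) (x y z : pt).

Definition std_polyhedron : ptset R m n := fun x => (forall i j, 0 <= x i j) /\ A x = b.

Definition coord_face i j : ptset R m n := fun x => std_polyhedron x /\ x i j = 0.

Lemma nonneg_perturb z (vs : seq pt) : (forall k l, 0 <= z k l) ->
  (forall v, v \in vs -> forall k l, z k l = 0 -> v k l = 0) ->
  exists2 e, 0 < e & forall v, v \in vs -> forall k l, 0 <= z k l + e * v k l.
Proof.
move=> z_ge0 supp.
pose T := \sum_(v <- vs) \sum_k \sum_l `|v k l| / z k l.
have ratio_ge0 (v : pt) k l : 0 <= `|v k l| / z k l by rewrite divr_ge0.
have T_ge0 : 0 <= T by do 3 apply: sumr_ge0 => ? _.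
exists (1 + T)^-1 => [|v vs_v k l]; first by rewrite invr_gt0; lra.
have [zkl0|zkl_neq0] := eqVneq (z k l) 0; first by rewrite zkl0 supp // mulr0 addr0.
have zkl_gt0 : 0 < z k l by rewrite lt0r zkl_neq0 z_ge0.
have ratio_le : `|v k l| / z k l <= T.
  apply: le_trans (ler_sum_term (F := fun l' => `|v k l'| / z k l') (mem_index_enum l) _) _ => //.
  apply: le_trans (ler_sum_term (F := fun k' => \sum_l `|v k' l| / z k' l) (mem_index_enum k) _) _.
    by move=> k'; apply: sumr_ge0.
  by apply: ler_sum_term => // w; do 2 apply: sumr_ge0 => ? _.
have small : (1 + T)^-1 * `|v k l| <= z k l.
  rewrite mulrC ler_pdivrMr; last lra.
  rewrite ler_pdivrMr // in ratio_le.
  by apply: (le_trans ratio_le); rewrite mulrC ler_wpM2l ?ltW //; lra.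
have : - ((1 + T)^-1 * `|v k l|) <= (1 + T)^-1 * v k l.
  by rewrite -mulrN ler_wpM2l ?invr_ge0 ?addr_ge0 // lerNnormlW.
lra.
Qed.

Lemma std_polyhedron_perturb x v e : std_polyhedron x -> A v = 0 ->
  (forall k l, 0 <= x k l + e * v k l) -> std_polyhedron (x + e *: v).
Proof.
move=> [_ Ax] Av xev_ge0; split=> [k l|]; first by rewrite !mxE.
by rewrite linearD linearZ /= Ax Av scaler0 addr0.
Qed.

Lemma span_diff_lker q (s : seq pt) :
  std_polyhedron q -> (forall p, p \in s -> std_polyhedron p) ->
  (<<[seq p - q | p <- s]>> <= lker A)%VS.
Proof.
move=> [_ Aq] Ps; apply/span_subvP => _ /mapP [p /Ps [_ Ap] ->].
by rewrite memv_ker linearB /= Ap Aq subrr.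
Qed.

Lemma coord_face_is_face i j : is_face std_polyhedron (coord_face i j).
Proof.
exists (- delta_mx i j), 0; split=> [x [x_ge0 _]|x]; rewrite pairingN pairing_delta.
  by rewrite oppr_le0.
by split=> [[Px ->]|[Px /eqP]]; rewrite ?oppr0 ?oppr_eq0 // => /eqP.
Qed.

Section CoordinateFaceDimension.
Variables (i : 'I_m) (j : 'I_n) (q : pt).
Hypotheses (q_face : coord_face i j q) (q_gt0 : forall k l, (k, l) != (i, j) -> 0 < q k l).

Lemma aff_dim_coord_face_ge D :
  aff_dim_ge std_polyhedron D.+1 -> aff_dim_ge (coord_face i j) D.
Proof.
case=> [[|p0 ps] [//= [size_ps [Pps indep]]]].
pose U := <<[seq p - q | p <- p0 :: ps]>>%VS.
pose W := (U :&: lker (linfun (pairing (delta_mx i j) : pt -> R^o)))%VS.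
have dimW : (D <= \dim W)%N.
  by rewrite -ltnS (leq_trans _ (dim_cap_lker_ge U _)) // -size_ps dim_span_diff.
have W_dir v : v \in vbasis W -> v i j = 0 /\ A v = 0.
  move=> /vbasis_mem /memv_capP [vU]; rewrite memv_ker lfunE /= pairing_delta => /eqP vij.
  split=> //; apply/eqP; rewrite -memv_ker.
  by apply: subvP vU; apply: span_diff_lker (proj1 q_face) Pps.
have [e e_gt0 qeW_ge0] : exists2 e, 0 < e &
    forall v, v \in vbasis W -> forall k l, 0 <= q k l + e * v k l.
  apply: nonneg_perturb => [|v /W_dir [vij _] k l qkl0]; first exact: q_face.1.1.
  have [[-> ->] //|kl_ij] := eqVneq (k, l) (i, j).
  by have := q_gt0 kl_ij; rewrite qkl0 ltxx.
apply: aff_dim_ge_leq dimW _; rewrite -(size_tuple (vbasis W)).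
apply: (aff_dim_ge_translate (e := e) _ q_face) (basis_free (vbasisP W)).
  by rewrite gt_eqF.
move=> v vW; have [vij Av] := W_dir v vW.
split; first exact: std_polyhedron_perturb q_face.1 Av (qeW_ge0 v vW).
by rewrite !mxE vij mulr0 addr0 q_face.2.
Qed.

End CoordinateFaceDimension.

Section Facets.
Variables (u : pt) (q : 'I_m -> 'I_n -> pt).
Hypotheses (u_poly : std_polyhedron u) (u_gt0 : forall k l, 0 < u k l).
Hypotheses (q_face : forall i j, coord_face i j (q i j))
  (q_gt0 : forall i j k l, (k, l) != (i, j) -> 0 < q i j k l).

Lemma aff_dim_coord_face_lift i j D :
  aff_dim_ge (coord_face i j) D -> aff_dim_ge std_polyhedron D.+1.
Proof.
apply: (aff_dim_ge_lift (c := delta_mx i j) (b := 0) _ u_poly).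
  by move=> x [Px xij]; rewrite pairing_delta.
by rewrite pairing_delta gt_eqF.
Qed.

Lemma face_pos_point_full F z : is_face std_polyhedron F -> F z -> (forall k l, 0 < z k l) ->
  forall p, std_polyhedron p -> F p.
Proof.
move=> [c [beta [valid Fdef]]] Fz z_gt0 p Pp; have [Pz cz] := (Fdef z).1 Fz.
have [e e_gt0 ze_ge0] : exists2 e, 0 < e &
    forall v, v \in [:: z - p] -> forall k l, 0 <= z k l + e * v k l.
  apply: nonneg_perturb => [k l|v _ k l zkl0]; first exact: ltW.
  by have := z_gt0 k l; rewrite zkl0 ltxx.
have Pze : std_polyhedron (z + e *: (z - p)).
  apply: std_polyhedron_perturb (ze_ge0 _ (mem_head _ _)) => //.
  by rewrite linearB /= Pz.2 Pp.2 subrr.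
have ineq : beta + e * (beta - pairing c p) <= beta.
  by have := valid _ Pze; rewrite linearD linearZ linearB /= cz.
apply/Fdef; split=> //; apply/eqP; rewrite eq_le valid //=.
by rewrite -subr_le0 -(pmulr_rle0 _ e_gt0); lra.
Qed.

Lemma exists_pos_point_in_face F : is_face std_polyhedron F -> (0 < m * n)%N ->
  (forall i j, exists2 y, F y & y i j != 0) -> exists2 z, F z & forall k l, 0 < z k l.
Proof.
move=> [c [beta [_ Fdef]]] mn_gt0 Fy.
have [Y FY] : exists Y : 'I_m -> 'I_n -> pt, forall i j, F (Y i j) /\ Y i j i j != 0.
  have /fin_all_exists [Y FY] i : exists Yi : 'I_n -> pt, forall j, F (Yi j) /\ Yi j i j != 0.
    apply: (fin_all_exists (P := fun j (y : pt) => F y /\ y i j != 0)) => j.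
    by have [y Fy' yij] := Fy i j; exists y.
  by exists Y.
have PY i j := (Fdef _).1 (FY i j).1.
have Y_ge0 i j k l : 0 <= Y i j k l by exact: (PY i j).1.1.
have mean_gt0' k l : 0 < mean Y k l.
  by apply: mean_gt0 => //; rewrite lt0r (FY k l).2 Y_ge0.
exists (mean Y) => //; apply/Fdef; split; first split.
- by move=> k l; exact: ltW.
- by apply: linear_mean => // i j; exact: (PY i j).1.2.
- by apply: (@linear_mean _ _ _ R^o (pairing c)) => // i j; exact: (PY i j).2.
Qed.

Lemma coord_face_is_facet i j : is_facet std_polyhedron (coord_face i j).
Proof.
split; first exact: coord_face_is_face.
have [[|k] [Pk nPk]] := aff_dim_eq_exists u_poly.
  by case: nPk; apply: (aff_dim_coord_face_lift (i := i) (j := j)); apply: aff_dim_ge0 (q_face i j).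
exists k; split=> //; split; first exact: aff_dim_coord_face_ge (q_face i j) (@q_gt0 i j) _ Pk.
by move/aff_dim_coord_face_lift.
Qed.

Lemma facet_coord_face F : is_facet std_polyhedron F ->
  exists i j, forall x, F x <-> coord_face i j x.
Proof.
move=> [Fface [k [[Pk nPk] [Fk nFk]]]].
have [c [beta [_ Fdef]]] := Fface.
have [i [j Fij]] : exists i j, forall x, F x -> x i j = 0.
  apply: NNPP => noF; have mn_gt0 : (0 < m * n)%N := leq_ltn_trans (leq0n k) (aff_dim_ge_le Pk).
  have [|z Fz z_gt0] := exists_pos_point_in_face Fface mn_gt0.
    move=> i j; apply: NNPP => noy; apply: noF; exists i, j => x Fx.
    by apply: NNPP => xij; apply: noy; exists x => //; apply/eqP.
  by apply: nFk; apply: aff_dim_ge_sub Pk; exact: face_pos_point_full Fface Fz z_gt0.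
exists i, j => x; split=> [Fx|[Px xij]]; first by split; [exact: ((Fdef x).1 Fx).1 | exact: Fij].
apply: NNPP => nFx; apply: nPk; apply: (aff_dim_coord_face_lift (i := i) (j := j)).
apply: (aff_dim_ge_lift (c := c) (b := beta) (s := x)) Fk => [y Fy|//|].
  by have [Py cy] := (Fdef y).1 Fy; do !split=> //; exact: Fij.
by apply/eqP => cx; apply: nFx; apply/Fdef.
Qed.

Lemma coord_face_inj i j k l :
  (forall x, coord_face i j x <-> coord_face k l x) -> (i, j) = (k, l).
Proof.
move=> eqF; apply/eqP; apply: contraT => ij_kl.
have [_ qij0] := (eqF (q k l)).2 (q_face k l).
by have := q_gt0 ij_kl; rewrite qij0 ltxx.
Qed.

Theorem std_polyhedron_num_facets : num_facets_eq std_polyhedron (m * n).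
Proof.
have card_pos : (m * n = #|{: 'I_m * 'I_n}|)%N by rewrite card_prod !card_ord.
pose pos (t : 'I_(m * n)) : 'I_m * 'I_n := enum_val (cast_ord card_pos t).
exists (fun t => coord_face (pos t).1 (pos t).2); split; [|split].
- by move=> t; exact: coord_face_is_facet.
- move=> t t' /coord_face_inj; rewrite -!surjective_pairing => /enum_val_inj.
  exact: cast_ord_inj.
- move=> F /facet_coord_face [i [j Fij]]; exists (cast_ord (esym card_pos) (enum_rank (i, j))).
  by rewrite /pos cast_ordKV enum_rankK.
Qed.

End Facets.
End StandardForm.

Section Transportation.
Variables (R : realFieldType) (m n : nat).
Notation pt := 'M[R]_(m, n).

Definition margins (x : pt) : 'cV[R]_m * 'rV[R]_n := (x *m const_mx 1, const_mx 1 *m x).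

Fact margins_is_linear : linear margins.
Proof. by move=> a x y; rewrite /margins mulmxDl mulmxDr -scalemxAl -scalemxAr. Qed.

HB.instance Definition _ := GRing.isLinear.Build R pt _ _ margins margins_is_linear.

Lemma transportation_std_poly (sup : 'I_m -> R) (dem : 'I_n -> R) :
  transportation_polytope sup dem = std_polyhedron (linfun margins) (\col_i sup i, \row_j dem j).
Proof.
apply: functional_extensionality => x; apply: propositional_extensionality.
rewrite /std_polyhedron lfunE /margins.
split=> [[x_ge0 [rows cols]]|[x_ge0 [/matrixP rows /matrixP cols]]].
  split=> //; congr pair; apply/matrixP => i j; rewrite !mxE.
    by rewrite -rows; apply: eq_bigr => l _; rewrite mxE mulr1.
  by rewrite -cols; apply: eq_bigr => k _; rewrite mxE mul1r.
split=> //; split=> [i|j].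
  by have := rows i 0; rewrite !mxE => <-; apply: eq_bigr => l _; rewrite mxE mulr1.
by have := cols 0 j; rewrite !mxE => <-; apply: eq_bigr => k _; rewrite mxE mul1r.
Qed.

End Transportation.

Section SupplyDemand.
Variables (R : realFieldType) (m n : nat) (d : 'I_m -> nat).
Hypotheses (hn : n = (1 + \sum_(mu < m) d mu)%N)
  (htwo : exists mu1 mu2 : 'I_m, mu1 != mu2 /\ (1 <= d mu1)%N /\ (1 <= d mu2)%N).
Notation pt := 'M[R]_(m, n).

Definition supply k : R := (1 + m * d k)%:R.

Lemma m_gt1 : (1 < m)%N.
Proof. by case: htwo => [[a a_lt] [[b b_lt] [/= ab _]]]; move: ab; rewrite -val_eqE /=; lia. Qed.

Lemma supply_lt i : (1 + m * d i < m * n.-1)%N.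
Proof.
have [mu mu_i d_mu] : exists2 mu, mu != i & (1 <= d mu)%N.
  case: htwo => mu1 [mu2 [mu12 [d1 d2]]].
  by have [<-|] := eqVneq mu1 i; [exists mu2; rewrite // eq_sym | exists mu1].
have : (d i + d mu <= \sum_k d k)%N.
  by rewrite (bigD1 i) //= (bigD1 mu) //= addnA leq_addr.
by rewrite hn /=; have := m_gt1; nia.
Qed.

Lemma n_gt1 : (1 < n)%N.
Proof. by case: htwo => mu _; have := supply_lt mu; nia. Qed.

Lemma supply_gt0 k : 0 < supply k.
Proof. by rewrite ltr0n. Qed.

Lemma sum_supply : \sum_k supply k = (m * n)%:R.
Proof.
rewrite -natr_sum big_split /= sum1_card card_ord -big_distrr /= hn.
by rewrite mulnDr muln1.
Qed.

Definition uniform_plan : pt := \matrix_(k, l) (supply k / n%:R).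

Lemma uniform_plan_gt0 k l : 0 < uniform_plan k l.
Proof. by rewrite mxE divr_gt0 ?supply_gt0 // ltr0n ltnW // n_gt1. Qed.

Lemma uniform_plan_P_d : P_d d uniform_plan.
Proof.
have n_neq0 : n%:R != 0 :> R by rewrite pnatr_eq0 -lt0n ltnW // n_gt1.
split=> [k l|]; first exact/ltW/uniform_plan_gt0.
split=> [k|l].
  rewrite (eq_bigr (fun _ => supply k / n%:R)) => [|l _]; last by rewrite mxE.
  by rewrite sumr_const card_ord -(mulr_natr (supply k / _)) divfK.
rewrite (eq_bigr (fun k => supply k / n%:R)) => [|k _]; last by rewrite mxE.
by rewrite -mulr_suml sum_supply natrM mulfK.
Qed.

Section OneZeroPlan.
Variables (i : 'I_m) (j : 'I_n).

Lemma n_pred_gt0 : 0 < n.-1%:R :> R.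
Proof. by rewrite ltr0n -ltnS prednK ?n_gt1 // ltnW ?n_gt1. Qed.

Definition row_share : R := supply i / n.-1%:R.

Definition rest_supply : R := (m * n)%:R - supply i.

Definition rest_demand l : R := if l == j then m%:R else m%:R - row_share.

Definition one_zero_plan : pt := \matrix_(k, l)
  if k == i then (if l == j then 0 else row_share)
  else supply k * rest_demand l / rest_supply.

Lemma row_share_gt0 : 0 < row_share.
Proof. by rewrite divr_gt0 ?supply_gt0 ?n_pred_gt0. Qed.

Lemma row_share_lt : row_share < m%:R.
Proof. by rewrite ltr_pdivrMr ?n_pred_gt0 // -natrM ltr_nat supply_lt. Qed.

Lemma row_share_mulrn : row_share *+ n.-1 = supply i.
Proof. by rewrite -mulr_natr divfK // gt_eqF ?n_pred_gt0. Qed.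

Lemma sum_supply_neq : \sum_(k | k != i) supply k = rest_supply.
Proof. by rewrite /rest_supply -sum_supply [X in _ = X - _](bigD1 i) //= addrC addrK. Qed.

Lemma rest_supply_gt0 : 0 < rest_supply.
Proof.
by rewrite subr_gt0 ltr_nat; have := supply_lt i; have := n_gt1; nia.
Qed.

Lemma rest_demand_gt0 l : 0 < rest_demand l.
Proof.
rewrite /rest_demand; case: eqP => _; first by rewrite ltr0n ltnW ?m_gt1.
by rewrite subr_gt0 row_share_lt.
Qed.

Lemma sum_rest_demand : \sum_l rest_demand l = rest_supply.
Proof.
rewrite (bigD1 j) //= {1}/rest_demand eqxx.
rewrite (eq_bigr (fun _ => m%:R - row_share)) => [|l /negbTE lj]; last by rewrite /rest_demand lj.
rewrite sumr_const cardC1 card_ord mulrnBl row_share_mulrn /rest_supply.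
by rewrite -[in RHS](prednK (ltnW n_gt1)) mulnS natrD natrM mulr_natr addrA.
Qed.

Lemma one_zero_plan_zero : one_zero_plan i j = 0.
Proof. by rewrite mxE !eqxx. Qed.

Lemma one_zero_plan_gt0 k l : (k, l) != (i, j) -> 0 < one_zero_plan k l.
Proof.
rewrite mxE xpair_eqE; have [_ /= lj|_ _] := eqVneq k i.
  by rewrite (negbTE lj) row_share_gt0.
by rewrite divr_gt0 ?mulr_gt0 ?supply_gt0 ?rest_demand_gt0 ?rest_supply_gt0.
Qed.

Lemma one_zero_plan_P_d : P_d d one_zero_plan.
Proof.
have rest_neq0 : rest_supply != 0 by rewrite gt_eqF ?rest_supply_gt0.
split=> [k l|].
  have [[-> ->]|kl_ij] := eqVneq (k, l) (i, j); first by rewrite one_zero_plan_zero.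
  exact/ltW/one_zero_plan_gt0.
split=> [k|l].
  have [->|ki] := eqVneq k i.
    rewrite (bigD1 j) //= one_zero_plan_zero add0r (eq_bigr (fun _ => row_share)).
      by rewrite sumr_const cardC1 card_ord row_share_mulrn.
    by move=> l /negbTE lj; rewrite mxE eqxx lj.
  rewrite (eq_bigr (fun l => supply k / rest_supply * rest_demand l)) => [|l _]; last first.
    by rewrite mxE (negbTE ki) mulrAC.
  by rewrite -big_distrr /= sum_rest_demand divfK.
rewrite (bigD1 i) //= (eq_bigr (fun k => supply k * (rest_demand l / rest_supply))); last first.
  by move=> k /negbTE ki; rewrite mxE ki mulrA.
rewrite -big_distrl /= sum_supply_neq mulrCA divff // mulr1 mxE eqxx /rest_demand.
by case: eqP => _; [rewrite add0r | rewrite addrC subrK].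
Qed.

End OneZeroPlan.

Lemma P_d_std_polyhedron :
  P_d d = std_polyhedron (linfun (@margins R m n)) (\col_k supply k, \row_l m%:R).
Proof. exact: transportation_std_poly. Qed.

End SupplyDemand.

Local Close Scope ring_scope.

Theorem lemma4p3 (R : realFieldType) (m n : nat) (d : 'I_m -> nat)
  (hn : n = (1 + \sum_(mu < m) d mu)%N)
  (htwo : exists mu1 mu2 : 'I_m, mu1 != mu2 /\ (1 <= d mu1)%N /\ (1 <= d mu2)%N) :
  @num_facets_eq R m n (@P_d R m n d) (m * n).
Proof.
rewrite P_d_std_polyhedron.
apply: (std_polyhedron_num_facets (u := uniform_plan R n d) (q := one_zero_plan R d)).
- by rewrite -P_d_std_polyhedron; exact: uniform_plan_P_d.
- exact: uniform_plan_gt0.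
- move=> i j; split; last exact: one_zero_plan_zero.
  by rewrite -P_d_std_polyhedron; exact: one_zero_plan_P_d.
- by move=> i j; exact: one_zero_plan_gt0.
Qed.
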